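(* In the reset-button collector, let $s_n:=\phi_n(q_n)=\mathbb Eq_n^{C_n}$. Then $\mathbb ET_n=\dfrac{1-s_n}{\rho_ns_n}$.
   Context: Reset-button collector: fix $n\ge1$. There are standard coupons $1,\dots,n$ and a reset coupon. At each discrete time $t=1,2,\dots$ one coupon is sampled independently: the reset coupon with probability $\rho_n\in(0,1)$, standard coupon $i$ with probability $p_{i,n}>0$, where $\sum_ip_{i,n}=q_n:=1-\rho_n$. Starting from the empty collection, drawn standard coupons are added; a reset empties the collection and collecting continues. $T_n$ is the first time all $n$ standard coupons are present. $C_n$ is the ordinary coupon collector completion time (number of i.i.d. draws until all types seen) with type probabilities $p_{i,n}/q_n$, and $\phi_n(z)=\mathbb Ez^{C_n}$. *)

From mathcomp Require Import all_boot all_order all_algebra.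
From mathcomp Require Import all_classical all_reals all_analysis.
Set Implicit Arguments. Unset Strict Implicit. Unset Printing Implicit Defensive.
Import Order.TTheory GRing.Theory Num.Theory numFieldNormedType.Exports.
Local Open Scope ring_scope.

(* A draw is an [option 'I_n]: [None] is the reset coupon, [Some i] the
   standard coupon i. *)
Definition reset_step (n : nat) (A : {set 'I_n}) (c : option 'I_n) : {set 'I_n} :=
  if c is Some i then i |: A else finset.set0.

Definition coll_state (n : nat) (s : seq (option 'I_n)) : {set 'I_n} :=
  foldl (@reset_step n) finset.set0 s.

Definition completes_at (n : nat) (s : seq (option 'I_n)) : bool :=
  (coll_state s == [set: 'I_n]) &&
  [forall k : 'I_(size s), coll_state (take k s) != [set: 'I_n]].

Definition reset_weight (R : realType) (n : nat) (rho : R) (p : 'I_n -> R)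
  (c : option 'I_n) : R := if c is Some i then p i else rho.

Definition probT (R : realType) (n : nat) (rho : R) (p : 'I_n -> R) (t : nat) : R :=
  \sum_(s : t.-tuple (option 'I_n) | completes_at s)
     \prod_(c <- s) reset_weight rho p c.

Definition expT (R : realType) (n : nat) (rho : R) (p : 'I_n -> R) : \bar R :=
  (\sum_(0 <= t <oo) ((t%:R * probT rho p t)%:E))%E.

(* P(C_n = k): ordinary coupon collector with type probabilities p_i / q
   (no resets: a sequence of standard coupons is a draw sequence without None) *)
Definition probC (R : realType) (n : nat) (q : R) (p : 'I_n -> R) (k : nat) : R :=
  \sum_(s : k.-tuple 'I_n | completes_at (map Some s))
     \prod_(i <- s) (p i / q).

Definition phiC (R : realType) (n : nat) (q : R) (p : 'I_n -> R) (z : R) : R :=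
  limn (series (fun k => z ^+ k * probC q p k)).

From mathcomp Require Import all_boot all_order all_algebra.
From mathcomp Require Import all_classical all_reals all_analysis.
From mathcomp Require Import ring lra.
Import Order.TTheory GRing.Theory Num.Theory numFieldNormedType.Exports.
Set Implicit Arguments. Unset Strict Implicit. Unset Printing Implicit Defensive.
Local Open Scope ring_scope.

(* Write f A for the probability that, from the collection A, every coupon is
   drawn before the next reset.  Since q^k P(C_n = k) is the probability that
   the collection completes at time k with no reset, phi_n(q) = f(empty): f is
   harmonic for the walk killed on completion, so the partial sums of phi_n(q)
   differ from f(empty) by the surviving mass of f, which is at most q^N.
   Likewise V A = (1 - f A) / (rho f(empty)) solves the Poisson equation
   V = 1 + P V of the killed reset walk, so the partial sums of E T_n differ
   from V(empty) by the surviving mass of N + V after N steps; as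
   P V <= (1 - rho f(empty)) V, that remainder is O(N r^N) with r < 1. *)

Lemma sum_tuple_rcons (V : nmodType) (X : finType) N (F : seq X -> V) :
  \sum_(s : N.+1.-tuple X) F s = \sum_(s : N.-tuple X) \sum_(x : X) F (rcons s x).
Proof.
rewrite pair_big /= (reindex (fun u : N.-tuple X * X => rcons_tuple u.1 u.2)) //=.
have headK (u : N.+1.-tuple X) : thead u :: behead u = u by rewrite [in RHS](tuple_eta u).
exists (fun u => ([tuple of belast (thead u) (behead u)], last (thead u) (behead u))).
- move=> [s x] _; set u := rcons_tuple s x.
  have /rcons_inj[Es ->] : rcons (belast (thead u) (behead u)) (last (thead u) (behead u))
                           = rcons s x by rewrite -lastI headK.
  by congr pair; apply: val_inj.
- by move=> u _; apply: val_inj; rewrite /= -lastI headK.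
Qed.

Lemma sum_option (V : nmodType) (I : finType) (F : option I -> V) :
  \sum_(o : option I) F o = F None + \sum_(i : I) F (Some i).
Proof.
rewrite (bigD1 None) //=; congr (_ + _).
rewrite (reindex_omap Some id) /=; last by case.
by apply: eq_bigl => i; rewrite eqxx.
Qed.

Lemma forall_ord_all_iota m (P : pred nat) : [forall k : 'I_m, P k] = all P (iota 0 m).
Proof.
apply/forallP/allP => [H j | H k].
- by rewrite mem_iota add0n => /andP[_ jm]; apply: (H (Ordinal jm)).
- by apply: H; rewrite mem_iota add0n ltn_ord.
Qed.

Lemma setT_neq0 n : (0 < n)%N -> [set: 'I_n] != finset.set0.
Proof. by move=> n_gt0; apply/set0Pn; exists (Ordinal n_gt0). Qed.

(* A walk draws letters of [X] with weights [wt], read as coupon draws through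
   [emb]: [Some] for the collector without resets, [id] for the reset collector.
   Weights need not sum to 1: with [wt := p] the mass of the walks of length [N]
   is [q ^+ N] times that of the normalised collector. *)
Section KilledWalk.
Variables (R : realType) (n : nat) (X : finType).
Variables (emb : X -> option 'I_n) (wt : X -> R).

Definition walk_state (s : seq X) : {set 'I_n} := coll_state (map emb s).

Definition unfinished (s : seq X) : bool :=
  all (fun k => walk_state (take k s) != [set: 'I_n]) (iota 0 (size s).+1).

Definition survival_mass N (f : {set 'I_n} -> R) : R :=
  \sum_(s : N.-tuple X | unfinished s) (\prod_(x <- s) wt x) * f (walk_state s).

Definition next_state (A : {set 'I_n}) (x : X) : {set 'I_n} := reset_step A (emb x).

Definition killed_step (f : {set 'I_n} -> R) (A : {set 'I_n}) : R :=
  \sum_x wt x * (if next_state A x == [set: 'I_n] then 0 else f (next_state A x)).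

Definition finish_mass (A : {set 'I_n}) : R :=
  \sum_x wt x * (next_state A x == [set: 'I_n])%:R.

Lemma walk_state_rcons s x : walk_state (rcons s x) = next_state (walk_state s) x.
Proof. by rewrite /walk_state /coll_state map_rcons foldl_rcons. Qed.

Lemma unfinished_prefixes_rcons s x :
  all (fun k => walk_state (take k (rcons s x)) != [set: 'I_n]) (iota 0 (size s).+1)
  = unfinished s.
Proof.
apply: eq_in_all => k; rewrite mem_iota add0n ltnS => /andP[_ le_ks].
by rewrite -cats1 takel_cat.
Qed.

Lemma unfinished_rcons s x :
  unfinished (rcons s x) = unfinished s && (next_state (walk_state s) x != [set: 'I_n]).
Proof.
rewrite /unfinished size_rcons -addn1 iotaD all_cat unfinished_prefixes_rcons /=.
by rewrite add0n andbT take_oversize ?size_rcons // walk_state_rcons.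
Qed.

Lemma unfinished_state s : unfinished s -> walk_state s != [set: 'I_n].
Proof.
move=> /allP /(_ (size s)); rewrite take_size; apply.
by rewrite mem_iota add0n ltnS leqnn.
Qed.

Lemma completes_at_rcons s x :
  completes_at (map emb (rcons s x)) =
  unfinished s && (next_state (walk_state s) x == [set: 'I_n]).
Proof.
rewrite /completes_at (forall_ord_all_iota _ (fun k =>
  coll_state (take k (map emb (rcons s x))) != [set: 'I_n])) size_map size_rcons andbC.
rewrite -(walk_state_rcons s x) -(unfinished_prefixes_rcons s x); congr (_ && _).
by apply: eq_all => k; rewrite /walk_state map_take.
Qed.

Definition completion_mass N : R :=
  \sum_(s : N.-tuple X | completes_at (map emb s)) \prod_(x <- s) wt x.

Lemma survival_massS N f : survival_mass N.+1 f = survival_mass N (killed_step f).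
Proof.
rewrite /survival_mass big_mkcond (sum_tuple_rcons _ (fun s : seq X =>
  if unfinished s then (\prod_(x <- s) wt x) * f (walk_state s) else 0)).
rewrite [RHS]big_mkcond; apply: eq_bigr => s _.
case: ifP => [alive_s|dead_s]; last by apply: big1 => x _; rewrite unfinished_rcons dead_s.
rewrite /killed_step mulr_sumr; apply: eq_bigr => x _.
rewrite unfinished_rcons alive_s walk_state_rcons big_rcons /=.
by case: eqP => _ /=; ring.
Qed.

Lemma completion_massS N : completion_mass N.+1 = survival_mass N finish_mass.
Proof.
rewrite /completion_mass /survival_mass big_mkcond (sum_tuple_rcons _ (fun s : seq X =>
  if completes_at (map emb s) then \prod_(x <- s) wt x else 0)).
rewrite [RHS]big_mkcond; apply: eq_bigr => s _.
case: ifP => [alive_s|dead_s]; last by apply: big1 => x _; rewrite completes_at_rcons dead_s.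
rewrite /finish_mass mulr_sumr; apply: eq_bigr => x _.
rewrite completes_at_rcons alive_s big_rcons /=.
by case: eqP => _ /=; ring.
Qed.

Lemma survival_massD N f g :
  survival_mass N (fun A => f A + g A) = survival_mass N f + survival_mass N g.
Proof. by rewrite /survival_mass -big_split; apply: eq_bigr => s _; rewrite mulrDr. Qed.

Lemma survival_massZ N a f :
  survival_mass N (fun A => a * f A) = a * survival_mass N f.
Proof. by rewrite /survival_mass mulr_sumr; apply: eq_bigr => s _; rewrite mulrCA. Qed.

Lemma eq_survival_mass N f g :
  {in [pred A | A != [set: 'I_n]], f =1 g} -> survival_mass N f = survival_mass N g.
Proof. by move=> eq_fg; apply: eq_bigr => s /unfinished_state alive_s; rewrite eq_fg. Qed.

Lemma killed_step_addc c f A :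
  killed_step (fun B => c + f B) A = c * (\sum_x wt x - finish_mass A) + killed_step f A.
Proof.
rewrite /killed_step /finish_mass mulrBr !mulr_sumr -sumrB -big_split.
by apply: eq_bigr => x _ /=; case: eqP => _ /=; ring.
Qed.

Hypothesis wt_ge0 : forall x, 0 <= wt x.

Lemma ler_survival_mass N f g :
  {in [pred A | A != [set: 'I_n]], forall A, f A <= g A} ->
  survival_mass N f <= survival_mass N g.
Proof.
move=> le_fg; apply: ler_sum => s /unfinished_state alive_s.
by rewrite ler_wpM2l ?le_fg //; apply: prodr_ge0.
Qed.

Lemma survival_mass_ge0 N f :
  {in [pred A | A != [set: 'I_n]], forall A, 0 <= f A} -> 0 <= survival_mass N f.
Proof.
move=> f_ge0; apply: sumr_ge0 => s /unfinished_state alive_s.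
by rewrite mulr_ge0 ?f_ge0 //; apply: prodr_ge0.
Qed.

Hypothesis n_gt0 : (0 < n)%N.

Lemma unfinished_nil : unfinished [::].
Proof. by rewrite /unfinished /= andbT eq_sym setT_neq0. Qed.

Lemma completes_at_nil : completes_at (map emb [::]) = false.
Proof. by rewrite /completes_at /= eq_sym (negbTE (setT_neq0 n_gt0)). Qed.

Lemma survival_mass0 f : survival_mass 0 f = f finset.set0.
Proof.
rewrite /survival_mass (big_pred1 [tuple]) ?big_nil ?mul1r // => s.
by rewrite [s]tuple0 unfinished_nil /=; apply/esym/eqP.
Qed.

Lemma completion_mass0 : completion_mass 0 = 0.
Proof. by rewrite /completion_mass big_pred0 // => s; rewrite tuple0 completes_at_nil. Qed.

Lemma harmonic_telescope h :
  {in [pred A | A != [set: 'I_n]], forall A, h A = finish_mass A + killed_step h A} ->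
  forall N, \sum_(0 <= t < N.+1) completion_mass t = h finset.set0 - survival_mass N h.
Proof.
move=> h_harmonic; elim=> [|N IH].
  by rewrite big_nat1 completion_mass0 survival_mass0 subrr.
rewrite big_nat_recr //= IH completion_massS (eq_survival_mass _ h_harmonic).
by rewrite survival_massD -survival_massS; ring.
Qed.

Lemma poisson_telescope V :
  \sum_x wt x = 1 ->
  {in [pred A | A != [set: 'I_n]], forall A, killed_step V A = V A - 1} ->
  forall N, \sum_(0 <= t < N.+1) t%:R * completion_mass t =
            V finset.set0 - survival_mass N (fun A => N%:R + V A).
Proof.
move=> wt_sum1 V_poisson; elim=> [|N IH].
  by rewrite big_nat1 completion_mass0 survival_mass0 mulr0 add0r subrr.
rewrite big_nat_recr //= IH completion_massS survival_massS.
have -> : survival_mass N (killed_step (fun A => N.+1%:R + V A)) =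
          survival_mass N (fun A => N%:R + V A) - N.+1%:R * survival_mass N finish_mass.
  rewrite -mulNr -survival_massZ -survival_massD; apply: eq_survival_mass => A A_unfinished.
  by rewrite killed_step_addc wt_sum1 V_poisson // -addn1 natrD; ring.
ring.
Qed.

Lemma survival_mass_geometric (r : R) f :
  0 <= r -> {in [pred A | A != [set: 'I_n]], forall A, killed_step f A <= r * f A} ->
  forall N, survival_mass N f <= r ^+ N * f finset.set0.
Proof.
move=> r_ge0 f_contract; elim=> [|N IH]; first by rewrite survival_mass0 mul1r.
rewrite survival_massS exprS -mulrA.
apply: le_trans (ler_survival_mass _ f_contract) _.
by rewrite survival_massZ ler_wpM2l.
Qed.

End KilledWalk.

Section FinishProbability.
Variables (R : realType) (n : nat) (p : 'I_n -> R).

(* The fuel [k] is the number of coupons missing from [A]; the recursion solves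
   f A = \sum_i p i * f (i |: A) for f A, as draws inside [A] leave [A] unchanged. *)
Fixpoint finish_prob_rec (k : nat) (A : {set 'I_n}) : R :=
  if k is k'.+1 then
    (\sum_(i | i \notin A) p i * finish_prob_rec k' (i |: A)) / (1 - \sum_(i in A) p i)
  else 1.

Definition finish_prob (A : {set 'I_n}) : R := finish_prob_rec #|~: A| A.

Lemma finish_prob_setT : finish_prob [set: 'I_n] = 1.
Proof. by rewrite /finish_prob finset.setCT finset.cards0. Qed.

Lemma card_setC_setU1 (A : {set 'I_n}) i : i \notin A -> #|~: A| = #|~: (i |: A)|.+1.
Proof.
move=> iNA; rewrite (finset.cardsD1 i (~: A)) inE iNA add1n; congr _.+1.
by apply: eq_card => j; rewrite !inE negb_or andbC.
Qed.

Lemma one_sub_sum_in (A : {set 'I_n}) :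
  1 - \sum_(i in A) p i = (1 - \sum_i p i) + \sum_(i | i \notin A) p i.
Proof. by rewrite [\sum_i p i](bigID (mem A)) /=; ring. Qed.

Hypothesis p_gt0 : forall i, 0 < p i.
Hypothesis sum_p_lt1 : \sum_i p i < 1.

Lemma one_sub_sum_in_gt0 (A : {set 'I_n}) : 0 < 1 - \sum_(i in A) p i.
Proof.
rewrite one_sub_sum_in ltr_wpDr ?subr_gt0 //.
by apply: sumr_ge0 => i _; apply: ltW.
Qed.

Lemma finish_prob_rec_bounds k A : #|~: A| = k -> 0 < finish_prob_rec k A <= 1.
Proof.
elim: k A => [|k IH] A cardA /=; first by rewrite ltr01 lexx.
have IHi i : i \notin A -> 0 < finish_prob_rec k (i |: A) <= 1.
  by move=> iNA; apply: IH; move: cardA; rewrite (card_setC_setU1 iNA) => -[].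
have [i0] : exists i0, i0 \in ~: A by apply/card_gt0P; rewrite cardA.
rewrite inE => i0NA.
rewrite divr_gt0 ?one_sub_sum_in_gt0 ?ler_pdivrMr ?one_sub_sum_in_gt0 //=.
  rewrite mul1r one_sub_sum_in; apply: ler_wpDl; first by rewrite subr_ge0 ltW.
  apply: ler_sum => i iNA; have /andP[_ le1] := IHi i iNA.
  by rewrite ler_piMr // ltW.
rewrite (bigD1 i0) //= ltr_wpDr ?mulr_gt0 ?(andP (IHi i0 i0NA)).1 //.
apply: sumr_ge0 => i /andP[iNA _]; have /andP[gt0 _] := IHi i iNA.
by rewrite mulr_ge0 ?ltW.
Qed.

Lemma finish_prob_bounds A : 0 < finish_prob A <= 1.
Proof. exact: finish_prob_rec_bounds. Qed.

Lemma finish_prob_harmonic A :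
  A != [set: 'I_n] -> finish_prob A = \sum_i p i * finish_prob (i |: A).
Proof.
move=> A_proper; have [k cardA] : exists k, #|~: A| = k.+1.
  case cardA: #|~: A| => [|k]; last by exists k.
  move/eqP: cardA; rewrite finset.cards_eq0 => /eqP eqA.
  by move: A_proper; rewrite -[A]finset.setCK eqA finset.setC0 eqxx.
have finish_A : finish_prob A * (1 - \sum_(i in A) p i) =
                \sum_(i | i \notin A) p i * finish_prob (i |: A).
  rewrite /finish_prob cardA /= mulfVK ?lt0r_neq0 ?one_sub_sum_in_gt0 //.
  apply: eq_bigr => i iNA.
  by move: cardA; rewrite (card_setC_setU1 iNA) => -[->].
rewrite (bigID (mem A)) /= -finish_A.
have -> : \sum_(i in A) p i * finish_prob (i |: A) = (\sum_(i in A) p i) * finish_prob A.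
  by rewrite mulr_suml; apply: eq_bigr => i iA; rewrite (finset.setUidPr _) // finset.sub1set.
ring.
Qed.

Lemma finish_prob_le_sum A : A != [set: 'I_n] -> finish_prob A <= \sum_i p i.
Proof.
move=> A_proper; rewrite finish_prob_harmonic //; apply: ler_sum => i _.
by rewrite ler_piMr ?(ltW (p_gt0 i)) // (andP (finish_prob_bounds _)).2.
Qed.

End FinishProbability.

Section Limits.
Variable R : realType.
Local Open Scope classical_set_scope.

Lemma natr_mul_expr_le (t : R) : 0 <= t < 1 -> forall N, N.+1%:R * t ^+ N <= (1 - t)^-1.
Proof.
move=> /andP[t_ge0 t_lt1] N; rewrite -[_^-1]mul1r ler_pdivlMr ?subr_gt0 //.
have bernoulli : t ^+ N * (1 + N%:R * (1 - t)) <= 1.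
  elim: N => [|N IH]; first by rewrite expr0 mul0r addr0 mulr1.
  have tN1_le1 : t * t ^+ N <= 1 by rewrite -exprS; apply: exprn_ile1 _ (ltW t_lt1).
  have /(ler_wpM2l t_ge0) := IH; rewrite mulr1 => tIH.
  have b_ge0 : 0 <= 1 - t by rewrite subr_ge0 ltW.
  have /(ler_wpM2l b_ge0) := tN1_le1; rewrite mulr1 => btN.
  rewrite exprS -addn1 natrD; lra.
have tN_ge0 : 0 <= t ^+ N by rewrite exprn_ge0.
have : (0 <= N%:R :> R) by rewrite ler0n.
rewrite -addn1 natrD; nra.
Qed.

Lemma cvg0_sandwich (e b : R^nat) :
  (forall N, 0 <= e N <= b N) -> b @ \oo --> 0 -> e @ \oo --> 0.
Proof.
move=> e_between b_cvg0; apply: (squeeze_cvgr _ (cvg_cst 0) b_cvg0).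
exact: nearW.
Qed.

Lemma natr_mul_expr_cvg0 (r : R) : 0 <= r < 1 -> (fun N => N.+1%:R * r ^+ N) @ \oo --> 0.
Proof.
move=> /andP[r_ge0 r_lt1]; set t := Num.sqrt r.
have t_ge0 : 0 <= t by rewrite sqrtr_ge0.
have t_lt1 : t < 1 by rewrite -sqrtr1 ltr_sqrt.
apply: (cvg0_sandwich (b := fun N => t ^+ N * (1 - t)^-1)) => [N|]; last first.
  rewrite -(mul0r (1 - t)^-1); apply: cvgM; last exact: cvg_cst.
  by apply: cvg_expr; rewrite ger0_norm.
rewrite mulr_ge0 ?exprn_ge0 //=.
have -> : r ^+ N = t ^+ N * t ^+ N by rewrite -exprMn -expr2 sqr_sqrtr.
rewrite mulrA mulrC ler_wpM2l ?exprn_ge0 //.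
by rewrite natr_mul_expr_le // t_ge0.
Qed.

Lemma cvgn_sub_remainder (u e : R^nat) (l : R) :
  (forall N, u N.+1 = l - e N) -> e @ \oo --> 0 -> u @ \oo --> l.
Proof.
move=> uE e_cvg0; rewrite -cvg_shiftS (_ : [sequence u _.+1]_ _ = fun N => l - e N).
  by have := cvgB (cvg_cst l) e_cvg0; rewrite subr0; apply.
by apply: funext => N; rewrite /= uE.
Qed.

End Limits.

Section ResetCollector.
Variables (R : realType) (n : nat) (rho : R) (p : 'I_n -> R).

Lemma probC_completion_mass q N :
  q != 0 -> q ^+ N * probC q p N = completion_mass Some p N.
Proof.
move=> q_neq0; rewrite /probC mulr_sumr; apply: eq_bigr => s _.
rewrite -{1}(size_tuple s); elim: (tval s) => [|i t IH]; first by rewrite !big_nil mulr1.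
by rewrite !big_cons /= exprS -IH; field.
Qed.

Lemma probT_completion_mass N :
  probT rho p N = completion_mass id (reset_weight rho p) N.
Proof. by apply: eq_bigl => s; rewrite map_id. Qed.

Hypothesis n_gt0 : (0 < n)%N.
Hypothesis rho_gt0 : 0 < rho.
Hypothesis p_gt0 : forall i, 0 < p i.
Hypothesis sum_p : \sum_i p i = 1 - rho.

Let p_ge0 i : 0 <= p i. Proof. exact: ltW. Qed.

Let sum_p_gt0 : 0 < \sum_i p i.
Proof. by rewrite (bigD1 (Ordinal n_gt0)) //= ltr_wpDr ?sumr_ge0. Qed.

Let sum_p_lt1 : \sum_i p i < 1.
Proof. by rewrite sum_p ltrBlDr ltrDl. Qed.

Let rho_le1 : rho <= 1.
Proof. by rewrite -subr_ge0 -sum_p ltW. Qed.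

Let finish_prob_gt0 A : 0 < finish_prob p A.
Proof. by have /andP[] := finish_prob_bounds p_gt0 sum_p_lt1 A. Qed.

Let finish_prob_le1 A : finish_prob p A <= 1.
Proof. by have /andP[] := finish_prob_bounds p_gt0 sum_p_lt1 A. Qed.

Lemma finish_prob_walk_harmonic :
  {in [pred A | A != [set: 'I_n]], forall A,
    finish_prob p A = finish_mass Some p A + killed_step Some p (finish_prob p) A}.
Proof.
move=> A A_proper; rewrite finish_prob_harmonic // /finish_mass /killed_step.
rewrite -big_split; apply: eq_bigr => i _ /=; rewrite /next_state /=.
by case: eqP => [->|_]; rewrite ?finish_prob_setT /=; ring.
Qed.

Lemma killed_step1_le_sum A : killed_step Some p (fun=> 1) A <= \sum_i p i.
Proof. by apply: ler_sum => i _; case: ifP; rewrite ?mulr0 ?mulr1. Qed.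

Definition mean_remaining_time (A : {set 'I_n}) : R :=
  (1 - finish_prob p A) / (rho * finish_prob p finset.set0).

Local Notation V := mean_remaining_time.
Local Notation s0 := (finish_prob p finset.set0).

Let rho_neq0 : rho != 0. Proof. exact: lt0r_neq0. Qed.
Let s0_neq0 : s0 != 0. Proof. exact: lt0r_neq0. Qed.
Let rho_s0_gt0 : 0 < rho * s0. Proof. by rewrite mulr_gt0. Qed.

Let rate_bounds : 0 <= 1 - rho * s0 < 1.
Proof.
rewrite subr_ge0 ltrBlDr ltrDl rho_s0_gt0 andbT -[1]mul1r.
by rewrite ler_pM ?finish_prob_le1 ?(ltW rho_gt0) ?(ltW (finish_prob_gt0 _)).
Qed.

Lemma reset_weight_ge0 c : 0 <= reset_weight rho p c.
Proof. by case: c => [i|] /=; rewrite ltW. Qed.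

Lemma reset_weight_sum : \sum_c reset_weight rho p c = 1.
Proof. by rewrite sum_option /= sum_p addrC subrK. Qed.

Lemma mean_remaining_time_poisson :
  {in [pred A | A != [set: 'I_n]], forall A,
    killed_step id (reset_weight rho p) V A = V A - 1}.
Proof.
move=> A A_proper; have V_setT : V [set: 'I_n] = 0.
  by rewrite /V finish_prob_setT subrr mul0r.
have -> : killed_step id (reset_weight rho p) V A =
          \sum_c reset_weight rho p c * V (next_state id A c).
  by apply: eq_bigr => c _; case: eqP => [->|_]; rewrite ?V_setT.
rewrite sum_option /next_state /=.
have -> : \sum_i p i * V (i |: A) = (1 - rho - finish_prob p A) / (rho * s0).
  rewrite finish_prob_harmonic // -sum_p -sumrB mulr_suml; apply: eq_bigr => i _.
  by rewrite /V; field; rewrite s0_neq0 rho_neq0.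
by rewrite /V; field; rewrite s0_neq0 rho_neq0.
Qed.

Lemma mean_remaining_time_ge1 A : A != [set: 'I_n] -> 1 <= V A.
Proof.
move=> A_proper; rewrite /V ler_pdivlMr // mul1r lerBrDr -lerBrDl.
apply: le_trans (finish_prob_le_sum p_gt0 sum_p_lt1 A_proper) _.
by rewrite sum_p lerB // ger_pMr // finish_prob_le1.
Qed.

Lemma mean_remaining_time_contract :
  {in [pred A | A != [set: 'I_n]], forall A,
    killed_step id (reset_weight rho p) V A <= (1 - rho * s0) * V A}.
Proof.
move=> A A_proper; rewrite mean_remaining_time_poisson // mulrBl mul1r lerB //.
by rewrite /V mulrCA mulfV ?mulf_neq0 // mulr1 lerBlDr lerDl ltW.
Qed.

Local Open Scope classical_set_scope.

Lemma finish_remainder_cvg0 :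
  (fun N => survival_mass Some p N (finish_prob p)) @ \oo --> 0.
Proof.
apply: (cvg0_sandwich (b := fun N => (\sum_i p i) ^+ N)) => [N|]; last first.
  by apply: cvg_expr; rewrite ger0_norm ?sum_p_lt1 ?sumr_ge0.
rewrite survival_mass_ge0 // => [|A _]; last exact: ltW.
apply: le_trans (_ : survival_mass Some p N (fun=> 1) <= _).
  by apply: ler_survival_mass => // A _; apply: finish_prob_le1.
rewrite -[X in _ <= X]mulr1; apply: survival_mass_geometric => // [|A _].
  exact: sumr_ge0.
by rewrite mulr1 killed_step1_le_sum.
Qed.

Lemma phiC_finish_prob : phiC (1 - rho) p (1 - rho) = finish_prob p finset.set0.
Proof.
apply/cvg_lim => //; apply: cvgn_sub_remainder finish_remainder_cvg0 => N.
rewrite /series /= -(harmonic_telescope n_gt0 finish_prob_walk_harmonic).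
by apply: eq_bigr => t _; rewrite probC_completion_mass // -sum_p lt0r_neq0.
Qed.

Lemma mean_time_remainder_cvg0 :
  (fun N => survival_mass id (reset_weight rho p) N (fun A => N%:R + V A)) @ \oo --> 0.
Proof.
have [rate_ge0 rate_lt1] := andP rate_bounds.
apply: (cvg0_sandwich (b := fun N => N.+1%:R * (1 - rho * s0) ^+ N * V finset.set0)).
  move=> N; rewrite survival_mass_ge0 /= => [|c|A /mean_remaining_time_ge1 V_ge1].
  - apply: le_trans (_ : survival_mass id _ N (fun A => N.+1%:R * V A) <= _).
      apply: ler_survival_mass => [c|A /mean_remaining_time_ge1 V_ge1].
        exact: reset_weight_ge0.
      by rewrite -addn1 natrD mulrDl mul1r lerD2r ler_peMr.
    rewrite survival_massZ -mulrA ler_wpM2l //.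
    exact: (survival_mass_geometric reset_weight_ge0 n_gt0 rate_ge0
                                    mean_remaining_time_contract N).
  - exact: reset_weight_ge0.
  - by rewrite addr_ge0 // (le_trans ler01).
rewrite -(mul0r (V finset.set0)); apply: cvgM; last exact: cvg_cst.
by apply: natr_mul_expr_cvg0; rewrite rate_ge0.
Qed.

Lemma expT_mean_remaining_time : expT rho p = (V finset.set0)%:E.
Proof.
have partial_cvg : (fun N => \sum_(0 <= t < N) t%:R * probT rho p t) @ \oo --> V finset.set0.
  apply: cvgn_sub_remainder mean_time_remainder_cvg0 => N.
  rewrite -(poisson_telescope n_gt0 reset_weight_sum mean_remaining_time_poisson).
  by apply: eq_bigr => t _; rewrite probT_completion_mass.
rewrite /expT (_ : (fun N => _) = EFin \o (fun N => \sum_(0 <= t < N) t%:R * probT rho p t)).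
  by rewrite EFin_lim ?(cvg_lim _ partial_cvg) //; apply/cvg_ex; exists (V finset.set0).
by apply: funext => N; rewrite /= sumEFin.
Qed.

End ResetCollector.

Theorem mainTheorem18 (R : realType) (n : nat) (rho : R) (p : 'I_n -> R) :
  (1 <= n)%N ->
  0 < rho < 1 ->
  (forall i, 0 < p i) ->
  \sum_(i < n) p i = 1 - rho ->
  let q := 1 - rho in
  let s := phiC q p q in
  expT rho p = ((1 - s) / (rho * s))%:E.
Proof.
(* [rho < 1] is implied by [p_gt0] and [sum_p]. *)
move=> n_gt0 /andP[rho_gt0 _] p_gt0 sum_p q s.
by rewrite /s /q phiC_finish_prob // expT_mean_remaining_time.
Qed.
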